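(* Let $n \ge 1$. If a partial coloring of an $n\times n$ square $A$ uniquely extends to $L(n,2n-2)$, then $A$ has at most $\frac{8n}{5}$ uncolored entries (hence at most $\lfloor 8n/5\rfloor$ uncolored entries).
   Context: For positive integers $n,k$, let $\mathcal{L}_{n,k}$ be the set of $n\times n$ squares all of whose entries are colored with colors from a fixed set of $k$ colors $\{1,\dots,k\}$ such that any two entries in the same row, or in the same column, have different colors. Entries are indexed $(i,j)$, $i$ the row and $j$ the column, $1\le i,j\le n$. A partial coloring of an $n\times n$ square assigns colors from $\{1,\dots,k\}$ to some of its entries; the remaining entries are called uncolored. A partial coloring extends to $L(n,k)$ if the uncolored entries can be colored so that the resulting fully colored square lies in $\mathcal{L}_{n,k}$ (keeping the given colors), and it uniquely extends to $L(n,k)$ if there is exactly one such way. *)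

From mathcomp Require Import all_boot.
Set Implicit Arguments. Unset Strict Implicit. Unset Printing Implicit Defensive.

(* A fully colored n x n square with colors in {1..k}, encoded as 'I_k
   (color c+1 represented by c). Entry (i,j): row i, column j. *)
Definition full_square (n k : nat) := 'I_n -> 'I_n -> 'I_k.

Definition in_L (n k : nat) (L : full_square n k) : Prop :=
  (forall i j1 j2, j1 != j2 -> L i j1 != L i j2) /\
  (forall i1 i2 j, i1 != i2 -> L i1 j != L i2 j).

(* A partial coloring: None = uncolored. *)
Definition partial_coloring (n k : nat) := 'I_n -> 'I_n -> option 'I_k.

Definition extension_of (n k : nat) (P : partial_coloring n k)
    (L : full_square n k) : Prop :=
  in_L L /\ (forall i j c, P i j = Some c -> L i j = c).

Definition extends (n k : nat) (P : partial_coloring n k) : Prop :=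
  exists L, extension_of P L.

Definition uniquely_extends (n k : nat) (P : partial_coloring n k) : Prop :=
  exists L, extension_of P L /\
    forall L', extension_of P L' -> forall i j, L' i j = L i j.

Definition num_uncolored (n k : nat) (P : partial_coloring n k) : nat :=
  #|[set ij : 'I_n * 'I_n | P ij.1 ij.2 == None]|.

(* Let L be the unique extension. Whatever color could be written into an
   uncolored cell (i,j) without a clash would give a second extension, so row i
   and column j of L together carry all 2n - 2 colors; having n colors each,
   they share exactly two, L i j and one more. Permuting colors among the
   uncolored cells of a line, or recoloring an uncolored 2 x 2 block, is
   blocked in the same way, and together with the two shared colors this rules
   out three uncolored cells in a line, an uncolored rectangle, and an
   alternating path of five uncolored cells. So every line holds at most two
   uncolored cells, and the cells whose row and column both hold a second one
   inject into the cells alone in exactly one of their two lines. Letting each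
   line hand 2 units to its uncolored cells, a cell alone in both lines gets 4,
   a cell of the second kind 3 and one of the first kind 2; doubling and
   comparing with 5 per cell gives 5 u <= 8 n. *)

From mathcomp Require Import all_boot fingroup perm zify.
Set Implicit Arguments. Unset Strict Implicit. Unset Printing Implicit Defensive.

Lemma sum_mem_subset (T : finType) (U D : {set T}) : D \subset U ->
  \sum_(x in U) (x \in D : nat) = #|D|.
Proof.
move=> sDU; rewrite -big_mkcondr -sum1_card /=; apply: eq_bigl => x.
by apply/andb_idl/subsetP.
Qed.

(* R, R' are the color sets of rows i1, i2 and C, C' those of columns j1, j2;
   a, b, c, t are the colors at (i1,j1), (i1,j2), (i2,j1), (i2,j2), all uncolored. *)
Section RectangleLogic.
Variables (T : eqType) (R R' C C' : pred T) (a b c t : T).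
Hypotheses (Ra : R a) (Rb : R b) (Ca : C a) (Cc : C c)
  (R'c : R' c) (R't : R' t) (C'b : C' b) (C't : C' t).
Hypotheses (ab : a <> b) (ac : a <> c) (bt : b <> t) (ct : c <> t).
Hypotheses
  (URC : forall x y, R x -> C x -> R y -> C y -> x <> a -> y <> a -> x = y)
  (URC' : forall x y, R x -> C' x -> R y -> C' y -> x <> b -> y <> b -> x = y)
  (UR'C : forall x y, R' x -> C x -> R' y -> C y -> x <> c -> y <> c -> x = y)
  (UR'C' : forall x y, R' x -> C' x -> R' y -> C' y -> x <> t -> y <> t -> x = y).
Hypothesis rigid : forall y11 y12 y21 y22,
  y11 <> y12 -> y21 <> y22 -> y11 <> y21 -> y12 <> y22 ->
  (R y11 -> y11 = a \/ y11 = b) -> (R y12 -> y12 = a \/ y12 = b) ->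
  (R' y21 -> y21 = c \/ y21 = t) -> (R' y22 -> y22 = c \/ y22 = t) ->
  (C y11 -> y11 = a \/ y11 = c) -> (C y21 -> y21 = a \/ y21 = c) ->
  (C' y12 -> y12 = b \/ y12 = t) -> (C' y22 -> y22 = b \/ y22 = t) ->
  [/\ y11 = a, y12 = b, y21 = c & y22 = t].

Lemma rigid_contra y11 y12 y21 y22 : ~ [/\ y11 = a, y12 = b, y21 = c & y22 = t] ->
  y11 <> y12 -> y21 <> y22 -> y11 <> y21 -> y12 <> y22 ->
  (R y11 -> y11 = a \/ y11 = b) -> (R y12 -> y12 = a \/ y12 = b) ->
  (R' y21 -> y21 = c \/ y21 = t) -> (R' y22 -> y22 = c \/ y22 = t) ->
  (C y11 -> y11 = a \/ y11 = c) -> (C y21 -> y21 = a \/ y21 = c) ->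
  (C' y12 -> y12 = b \/ y12 = t) -> (C' y22 -> y22 = b \/ y22 = t) -> False.
Proof. by move=> moved *; apply/moved/rigid. Qed.

Ltac rigid_side := let H := fresh in move=> H;
  first [ by left | by right | solve [left; congruence] | solve [right; congruence]
        | match goal with Hn : is_true (~~ _) |- _ => solve [rewrite H in Hn; done] end ].

Ltac rigid_close y11 y12 y21 y22 :=
  by apply: (@rigid_contra y11 y12 y21 y22) => //;
     try (match goal with |- ~ [/\ _, _, _ & _] => by case; congruence end);
     try congruence; rigid_side.

Lemma rectangle_latin : b = c -> a = t -> False.
Proof. by move=> bc at_; rigid_close b a a b. Qed.

Lemma rectangle_antidiagonal : b = c -> a <> t -> False.
Proof.
move=> bc nat.
have n1 : ~~ (R t && C t).
  apply/negP => /andP[Rt Ct]; apply: bt; symmetry.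
  by apply: URC => //; congruence.
have n2 : ~~ (R' a && C' a).
  apply/negP => /andP[R'a C'a]; apply: ab.
  by apply: UR'C' => //; congruence.
have n3 : ~~ (R t && C' a).
  apply/negP => /andP[Rt C'a]; apply: nat; symmetry.
  by apply: URC' => //; congruence.
have n4 : ~~ (R' a && C t).
  apply/negP => /andP[R'a Ct]; apply: nat.
  by apply: UR'C => //; congruence.
have m1 : R t || R' a by apply/negPn/negP => /norP[? ?]; rigid_close b t a b.
have m2 : C t || C' a by apply/negPn/negP => /norP[? ?]; rigid_close b a t b.
have m3 : R' a || C' a by apply/negPn/negP => /norP[? ?]; rigid_close b a a t.
have m4 : R t || C t by apply/negPn/negP => /norP[? ?]; rigid_close a t t b.
move: n1 n2 n3 n4 m1 m2 m3 m4.
by case: (R t); case: (C t); case: (R' a); case: (C' a).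
Qed.

Lemma rectangle_diagonal : b <> c -> a = t -> False.
Proof.
move=> nbc at_.
have n1 : ~~ (C b && R c).
  apply/negP => /andP[Cb Rc]; apply: nbc.
  by apply: URC => //; congruence.
have n2 : ~~ (R' b && C' c).
  apply/negP => /andP[R'b C'c]; apply: nbc.
  by apply: UR'C' => //; congruence.
have n3 : ~~ (R c && C' c).
  apply/negP => /andP[Rc C'c]; apply: ac; symmetry.
  by apply: URC' => //; congruence.
have n4 : ~~ (R' b && C b).
  apply/negP => /andP[R'b Cb]; apply: ab; symmetry.
  by apply: UR'C => //; congruence.
have m1 : R' b || C b by apply/negPn/negP => /norP[? ?]; rigid_close b a c b.
have m2 : R c || C' c by apply/negPn/negP => /norP[? ?]; rigid_close c b a c.
have m3 : C b || C' c by apply/negPn/negP => /norP[? ?]; rigid_close b a a c.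
have m4 : R c || R' b by apply/negPn/negP => /norP[? ?]; rigid_close c a a b.
move: n1 n2 n3 n4 m1 m2 m3 m4.
by case: (R c); case: (C b); case: (R' b); case: (C' c).
Qed.

Lemma rectangle_generic : b <> c -> a <> t -> False.
Proof.
move=> nbc nat.
have n1 : ~~ (C b && R c).
  apply/negP => /andP[Cb Rc]; apply: nbc.
  by apply: URC => //; congruence.
have n2 : ~~ (C' a && R t).
  apply/negP => /andP[C'a Rt]; apply: nat.
  by apply: URC' => //; congruence.
have n3 : ~~ (R' a && C t).
  apply/negP => /andP[R'a Ct]; apply: nat.
  by apply: UR'C => //; congruence.
have n4 : ~~ (R' b && C' c).
  apply/negP => /andP[R'b C'c]; apply: nbc.
  by apply: UR'C' => //; congruence.
have m1 : C b || C' a by apply/negPn/negP => /norP[? ?]; rigid_close b a c t.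
have m2 : R c || R' a by apply/negPn/negP => /norP[? ?]; rigid_close c b a t.
have m3 : C t || C' c by apply/negPn/negP => /norP[? ?]; rigid_close a b t c.
have m4 : R t || R' b by apply/negPn/negP => /norP[? ?]; rigid_close a t c b.
have m5 : [|| R t, R' a, C b | C' c].
  by apply/negPn/negP => /norP[? /norP[? /norP[? ?]]]; rigid_close b t a c.
have m6 : [|| R c, R' b, C t | C' a].
  by apply/negPn/negP => /norP[? /norP[? /norP[? ?]]]; rigid_close c a t b.
move: n1 n2 n3 n4 m1 m2 m3 m4 m5 m6.
by case: (R c); case: (R t); case: (R' a); case: (R' b);
   case: (C b); case: (C t); case: (C' a); case: (C' c).
Qed.

Lemma rectangle_contra : False.
Proof.
have [bc|/eqP nbc] := eqVneq b c; have [at_|/eqP nat] := eqVneq a t.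
- exact: rectangle_latin.
- exact: rectangle_antidiagonal.
- exact: rectangle_diagonal.
- exact: rectangle_generic.
Qed.

End RectangleLogic.

(* R_i and C_j are the color sets of rows r_i and columns c_j, x_ij is the color
   at (r_i, c_j), and the uncolored cells are (1,2), (3,2), (3,4), (5,4), (5,6). *)
Section ZigzagLogic.
Variable T : eqType.
Variables (R1 C2 R3 C4 R5 C6 : T -> Prop) (x12 x32 x34 x54 x56 x14 x16 x36 x52 : T).
Hypotheses (C2x12 : C2 x12) (R3x32 : R3 x32) (C2x32 : C2 x32)
  (R3x34 : R3 x34) (C4x34 : C4 x34) (R5x54 : R5 x54) (C4x54 : C4 x54)
  (R5x56 : R5 x56) (R1x14 : R1 x14) (C4x14 : C4 x14)
  (R1x16 : R1 x16) (C6x16 : C6 x16) (R3x36 : R3 x36) (C6x36 : C6 x36)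
  (R5x52 : R5 x52) (C2x52 : C2 x52).
Hypotheses (G32 : forall x, C2 x \/ R3 x) (G34 : forall x, R3 x \/ C4 x)
  (G54 : forall x, C4 x \/ R5 x).
Hypotheses (U12 : forall x y, R1 x -> C2 x -> R1 y -> C2 y -> x <> x12 -> y <> x12 -> x = y)
 (U32 : forall x y, C2 x -> R3 x -> C2 y -> R3 y -> x <> x32 -> y <> x32 -> x = y)
 (U34 : forall x y, R3 x -> C4 x -> R3 y -> C4 y -> x <> x34 -> y <> x34 -> x = y)
 (U54 : forall x y, C4 x -> R5 x -> C4 y -> R5 y -> x <> x54 -> y <> x54 -> x = y)
 (U56 : forall x y, R5 x -> C6 x -> R5 y -> C6 y -> x <> x56 -> y <> x56 -> x = y).
Hypotheses (n12_14 : x12 <> x14) (n12_16 : x12 <> x16) (n14_16 : x14 <> x16)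
  (n32_34 : x32 <> x34) (n32_36 : x32 <> x36) (n34_36 : x34 <> x36)
  (n52_54 : x52 <> x54) (n52_56 : x52 <> x56) (n54_56 : x54 <> x56)
  (n12_32 : x12 <> x32) (n12_52 : x12 <> x52) (n32_52 : x32 <> x52)
  (n14_34 : x14 <> x34) (n14_54 : x14 <> x54) (n34_54 : x34 <> x54)
  (n16_36 : x16 <> x36) (n16_56 : x16 <> x56) (n36_56 : x36 <> x56).
Hypotheses (SC2 : R1 x32 \/ R3 x12) (SR3 : C2 x34 \/ C4 x32)
  (SC4 : R3 x54 \/ R5 x34) (SR5 : C4 x56 \/ C6 x54).

Lemma zigzag_notC4x32 : C4 x32 -> False.
Proof.
move=> C4x32.
have R5x36 : R5 x36.
  case: (G54 x36) => // C4x36; exfalso; apply: n32_36.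
  exact: (U34 R3x32 C4x32 R3x36 C4x36 n32_34 (not_eq_sym n34_36)).
have C2x14 : C2 x14.
  case: (G32 x14) => // R3x14.
  by rewrite (U34 R3x14 C4x14 R3x32 C4x32 n14_34 n32_34).
have R3x16 : R3 x16.
  case: (G32 x16) => // C2x16; exfalso; apply: n14_16.
  exact: (U12 R1x14 C2x14 R1x16 C2x16 (not_eq_sym n12_14) (not_eq_sym n12_16)).
have C4x16 : C4 x16.
  case: (G54 x16) => // R5x16; exfalso; apply: n16_36.
  exact: (U56 R5x16 C6x16 R5x36 C6x36 n16_56 n36_56).
have e16_34 : x16 = x34.
  case: (eqVneq x16 x34) => // /eqP e16_34.
  have e16_32 := U34 R3x16 C4x16 R3x32 C4x32 e16_34 n32_34.
  exfalso; apply: n14_16; apply: (U12 R1x14 C2x14 R1x16 _ (not_eq_sym n12_14) (not_eq_sym n12_16)).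
  by rewrite e16_32.
have R1x34 : R1 x34 by rewrite -e16_34.
have C6x34 : C6 x34 by rewrite -e16_34.
case: SC4 => [R3x54|R5x34].
  have e54_32 := U34 R3x54 C4x54 R3x32 C4x32 (not_eq_sym n34_54) n32_34.
  have R5x32 : R5 x32 by rewrite -e54_32.
  case: SR5 => [C4x56|C6x54].
    case: SC2 => [R1x32|R3x12].
      apply: n14_54; rewrite e54_32.
      exact: (U12 R1x14 C2x14 R1x32 C2x32 (not_eq_sym n12_14) (not_eq_sym n12_32)).
    case: (G34 x52) => [R3x52|C4x52].
      apply: n12_52; exact: (U32 C2x12 R3x12 C2x52 R3x52 n12_32 (not_eq_sym n32_52)).
    apply: n52_56; exact: (U54 C4x52 R5x52 C4x56 R5x56 n52_54 (not_eq_sym n54_56)).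
  apply: n32_36; rewrite -e54_32; exact: (U56 R5x54 C6x54 R5x36 C6x36 n54_56 n36_56).
apply: n34_36; apply: (U56 R5x34 C6x34 R5x36 C6x36 _ n36_56).
by rewrite -e16_34.
Qed.

Lemma zigzag_C2x34_R5x34 : C2 x34 -> R5 x34 -> ~ C4 x32 -> ~ R3 x54 -> False.
Proof.
move=> C2x34 R5x34 nC4x32 nR3x54.
have e52_34 : x52 = x34.
  case: (G34 x52) => [R3x52|C4x52].
    exact: (U32 C2x52 R3x52 C2x34 R3x34 (not_eq_sym n32_52) (not_eq_sym n32_34)).
  exact: (U54 C4x52 R5x52 C4x34 R5x34 n52_54 n34_54).
have R1x32 : R1 x32.
  case: SC2 => // R3x12; exfalso; apply: n12_52; rewrite e52_34.
  exact: (U32 C2x12 R3x12 C2x34 R3x34 n12_32 (not_eq_sym n32_34)).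
have C6x54 : C6 x54.
  case: SR5 => // C4x56; exfalso; apply: n52_56; rewrite e52_34.
  exact: (U54 C4x34 R5x34 C4x56 R5x56 n34_54 (not_eq_sym n54_56)).
have R3x14 : R3 x14.
  case: (G32 x14) => // C2x14; exfalso; apply: nC4x32.
  by rewrite -(U12 R1x14 C2x14 R1x32 C2x32 (not_eq_sym n12_14) (not_eq_sym n12_32)).
case: (G32 x16) => [C2x16|R3x16].
  have e16_32 := U12 R1x16 C2x16 R1x32 C2x32 (not_eq_sym n12_16) (not_eq_sym n12_32).
  have C6x32 : C6 x32 by rewrite -e16_32.
  case: (G54 x32) => // R5x32.
  apply: nR3x54; rewrite -(U56 R5x32 C6x32 R5x54 C6x54 _ n54_56) //.
  by rewrite -e16_32.
case: (G54 x16) => [C4x16|R5x16].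
  case: (eqVneq x16 x34) => [e16_34|/eqP n16_34].
    have R1x34 : R1 x34 by rewrite -e16_34.
    apply: n32_34; apply: (U12 R1x32 C2x32 R1x34 C2x34 (not_eq_sym n12_32)).
    by move=> e34_12; apply: n12_52; rewrite e52_34 -e34_12.
  by apply: n14_16; exact: (U34 R3x14 C4x14 R3x16 C4x16 n14_34 n16_34).
have e16_54 := U56 R5x16 C6x16 R5x54 C6x54 n16_56 n54_56.
have R1x54 : R1 x54 by rewrite -e16_54.
case: (G32 x54) => // C2x54.
apply: nR3x54; rewrite (U12 R1x54 C2x54 R1x32 C2x32 _ (not_eq_sym n12_32)) //.
by rewrite -e16_54; apply: not_eq_sym.
Qed.

End ZigzagLogic.

Ltac zigzag_hyps := try (by apply: not_eq_sym);
  try (move=> x; match goal with G : forall x, _ |- _ => solve [case: (G x); auto] end);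
  try (by move=> x y H1 H2 H3 H4 H5 H6; match goal with U : forall x y, _ |- _ => apply: U end);
  try (match goal with S : _ \/ _ |- _ => solve [case: S; auto] end).

Lemma zigzag_contra (T : eqType) (R1 C2 R3 C4 R5 C6 : T -> Prop)
  (x12 x32 x34 x54 x56 x14 x16 x36 x52 : T)
  (C2x12 : C2 x12) (R3x32 : R3 x32) (C2x32 : C2 x32)
  (R3x34 : R3 x34) (C4x34 : C4 x34) (R5x54 : R5 x54) (C4x54 : C4 x54)
  (R5x56 : R5 x56) (R1x14 : R1 x14) (C4x14 : C4 x14)
  (R1x16 : R1 x16) (C6x16 : C6 x16) (R3x36 : R3 x36) (C6x36 : C6 x36)
  (R5x52 : R5 x52) (C2x52 : C2 x52)
  (G32 : forall x, C2 x \/ R3 x) (G34 : forall x, R3 x \/ C4 x) (G54 : forall x, C4 x \/ R5 x)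
  (U12 : forall x y, R1 x -> C2 x -> R1 y -> C2 y -> x <> x12 -> y <> x12 -> x = y)
  (U32 : forall x y, C2 x -> R3 x -> C2 y -> R3 y -> x <> x32 -> y <> x32 -> x = y)
  (U34 : forall x y, R3 x -> C4 x -> R3 y -> C4 y -> x <> x34 -> y <> x34 -> x = y)
  (U54 : forall x y, C4 x -> R5 x -> C4 y -> R5 y -> x <> x54 -> y <> x54 -> x = y)
  (U56 : forall x y, R5 x -> C6 x -> R5 y -> C6 y -> x <> x56 -> y <> x56 -> x = y)
  (n12_14 : x12 <> x14) (n12_16 : x12 <> x16) (n14_16 : x14 <> x16)
  (n32_34 : x32 <> x34) (n32_36 : x32 <> x36) (n34_36 : x34 <> x36)
  (n52_54 : x52 <> x54) (n52_56 : x52 <> x56) (n54_56 : x54 <> x56)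
  (n12_32 : x12 <> x32) (n12_52 : x12 <> x52) (n32_52 : x32 <> x52)
  (n14_34 : x14 <> x34) (n14_54 : x14 <> x54) (n34_54 : x34 <> x54)
  (n16_36 : x16 <> x36) (n16_56 : x16 <> x56) (n36_56 : x36 <> x56)
  (SC2 : R1 x32 \/ R3 x12) (SR3 : C2 x34 \/ C4 x32)
  (SC4 : R3 x54 \/ R5 x34) (SR5 : C4 x56 \/ C6 x54) : False.
Proof.
have nC4x32 : ~ C4 x32.
  move=> C4x32; apply: (zigzag_notC4x32 (R1 := R1) (C2 := C2) (R3 := R3) (C4 := C4)
    (R5 := R5) (C6 := C6) (x12 := x12) (x32 := x32) (x34 := x34) (x54 := x54)
    (x56 := x56) (x14 := x14) (x16 := x16) (x36 := x36) (x52 := x52)) => //; zigzag_hyps.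
(* Read backwards, the zigzag is again a zigzag, with rows and columns exchanged. *)
have nR3x54 : ~ R3 x54.
  move=> R3x54; apply: (zigzag_notC4x32 (R1 := C6) (C2 := R5) (R3 := C4) (C4 := R3)
    (R5 := C2) (C6 := R1) (x12 := x56) (x32 := x54) (x34 := x34) (x54 := x32)
    (x56 := x12) (x14 := x36) (x16 := x16) (x36 := x14) (x52 := x52)) => //; zigzag_hyps.
case: SR3 => [C2x34|/nC4x32 //]; case: SC4 => [/nR3x54 //|R5x34].
by apply: (zigzag_C2x34_R5x34 (R1 := R1) (C2 := C2) (R3 := R3) (C4 := C4)
  (R5 := R5) (C6 := C6) (x12 := x12) (x32 := x32) (x34 := x34) (x54 := x54)
  (x56 := x56) (x14 := x14) (x16 := x16) (x52 := x52)) => //; zigzag_hyps.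
Qed.

Section UniqueExtension.
Variable n : nat.
Local Notation k := (2 * n - 2).
Variables (P : partial_coloring n k) (L : full_square n k).
Hypothesis LP : extension_of P L.
Hypothesis L_unique : forall L', extension_of P L' -> forall i j, L' i j = L i j.

Definition row_colors i := [set L i j | j : 'I_n].
Definition col_colors j := [set L i j | i : 'I_n].
Definition uncolored i j := P i j == None.

Lemma row_inj i : injective (L i).
Proof.
move=> j1 j2 e; apply/eqP; apply: contraLR isT => ne.
by have /eqP := LP.1.1 i j1 j2 ne.
Qed.

Lemma col_inj j : injective (L^~ j).
Proof.
move=> i1 i2 /= e; apply/eqP; apply: contraLR isT => ne.
by have /eqP := LP.1.2 i1 i2 j ne.
Qed.

Lemma row_color_neq i j1 j2 : j1 != j2 -> L i j1 <> L i j2.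
Proof. by move=> /eqP j12 /row_inj. Qed.

Lemma col_color_neq j i1 i2 : i1 != i2 -> L i1 j <> L i2 j.
Proof. by move=> /eqP i12 /col_inj. Qed.

Lemma mem_row_colors i j : L i j \in row_colors i. Proof. exact: imset_f. Qed.
Lemma mem_col_colors i j : L i j \in col_colors j. Proof. exact: imset_f. Qed.

Lemma card_row_colors i : #|row_colors i| = n.
Proof. by rewrite card_imset ?card_ord //; exact: row_inj. Qed.

Lemma card_col_colors j : #|col_colors j| = n.
Proof. by rewrite card_imset ?card_ord //; exact: col_inj. Qed.

(* Any recoloring y of a set D of uncolored cells that keeps every row and
   column proper is another extension of P, hence agrees with L. *)
Lemma recolor_eq (D : 'I_n -> 'I_n -> bool) (y : 'I_n -> 'I_n -> 'I_k) :
  (forall i j, D i j -> uncolored i j) ->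
  (forall i j j', D i j -> D i j' -> j != j' -> y i j != y i j') ->
  (forall i i' j, D i j -> D i' j -> i != i' -> y i j != y i' j) ->
  (forall i j, D i j -> y i j \in row_colors i -> exists2 j', D i j' & y i j = L i j') ->
  (forall i j, D i j -> y i j \in col_colors j -> exists2 i', D i' j & y i j = L i' j) ->
  forall i j, D i j -> y i j = L i j.
Proof.
move=> Dunc yrow ycol yrowL ycolL i j Dij.
have yrow_out i0 j0 j1 : D i0 j0 -> ~~ D i0 j1 -> y i0 j0 != L i0 j1.
  move=> D0 nD1; apply/eqP => E.
  have := yrowL _ _ D0; rewrite E mem_row_colors => /(_ isT) [j' Dj' /row_inj eq_j].
  by move: nD1; rewrite eq_j Dj'.
have ycol_out i0 i1 j0 : D i0 j0 -> ~~ D i1 j0 -> y i0 j0 != L i1 j0.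
  move=> D0 nD1; apply/eqP => E.
  have := ycolL _ _ D0; rewrite E mem_col_colors => /(_ isT) [i' Di' /col_inj eq_i].
  by move: nD1; rewrite eq_i Di'.
pose L' : full_square n k := fun i j => if D i j then y i j else L i j.
suff /L_unique/(_ i j) : extension_of P L' by rewrite /L' Dij.
split; [split|].
- move=> i0 j1 j2 ne; rewrite /L'.
  case D1: (D i0 j1); case D2: (D i0 j2).
  + exact: yrow.
  + by rewrite yrow_out ?D2.
  + by rewrite eq_sym yrow_out ?D1.
  + exact: LP.1.1.
- move=> i1 i2 j0 ne; rewrite /L'.
  case D1: (D i1 j0); case D2: (D i2 j0).
  + exact: ycol.
  + by rewrite ycol_out ?D2.
  + by rewrite eq_sym ycol_out ?D1.
  + exact: LP.1.2.
- move=> i0 j0 c Pc; rewrite /L'.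
  case D0: (D i0 j0); last exact: LP.2.
  by move: (Dunc _ _ D0); rewrite /uncolored Pc.
Qed.

Lemma recolor_row_eq i (S : pred 'I_n) (y : 'I_n -> 'I_k) :
  (forall j, S j -> uncolored i j) ->
  (forall j j', S j -> S j' -> j != j' -> y j != y j') ->
  (forall j, S j -> y j \in row_colors i -> exists2 j', S j' & y j = L i j') ->
  (forall j, S j -> y j \notin col_colors j) ->
  forall j, S j -> y j = L i j.
Proof.
move=> Sunc yinj yrowL ycol; pose D i0 j0 := (i0 == i) && S j0.
have DP i0 j0 : D i0 j0 -> i0 = i /\ S j0 by case/andP=> /eqP.
move=> j Sj; apply: (@recolor_eq D (fun _ => y)); rewrite /D ?eqxx //.
- by move=> ? ? /DP[-> /Sunc].
- by move=> ? ? ? /DP[_ ?] /DP[_ ?]; exact: yinj.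
- by move=> ? ? ? /DP[-> _] /DP[-> _]; rewrite eqxx.
- by move=> ? ? /DP[-> /yrowL yL] /yL[j' Sj' ->]; exists j'; rewrite ?eqxx.
- by move=> ? ? /DP[_ /ycol/negbTE->].
Qed.

Lemma uncolored_cover i j x : uncolored i j -> (x \in row_colors i) || (x \in col_colors j).
Proof.
move=> uij; apply/negPn/negP => /norP[nR nC].
suff xL : x = L i j by move: nR; rewrite xL mem_row_colors.
apply: (@recolor_row_eq i (pred1 j) (fun _ => x)) => //=.
- by move=> ? /eqP->.
- by move=> ? ? /eqP-> /eqP->; rewrite eqxx.
- by rewrite (negbTE nR).
- by move=> ? /eqP->.
Qed.

Lemma card_row_col_colors i j : uncolored i j -> #|row_colors i :&: col_colors j| = 2.
Proof.
move=> uij; have n_gt0 : 0 < n := leq_ltn_trans (leq0n i) (ltn_ord i).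
have cover : row_colors i :|: col_colors j = setT.
  by apply/setP => x; rewrite inE in_setT; exact: uncolored_cover.
have := cardsUI (row_colors i) (col_colors j).
by rewrite cover cardsT card_ord card_row_colors card_col_colors; lia.
Qed.

Lemma common_color_eq i j x y : uncolored i j ->
  x \in row_colors i -> x \in col_colors j -> y \in row_colors i -> y \in col_colors j ->
  x <> L i j -> y <> L i j -> x = y.
Proof.
move=> uij xR xC yR yC /eqP xL /eqP yL; apply/eqP; apply: contraT => xy.
suff : 2 < #|row_colors i :&: col_colors j| by rewrite card_row_col_colors.
apply/card_gt2P; exists x, y, (L i j).
by rewrite !inE xR xC yR yC mem_row_colors mem_col_colors xy (eq_sym (L i j)) xL yL.
Qed.

Lemma row_perm_fixed i (S : pred 'I_n) (s : {perm 'I_n}) :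
  (forall j, S j -> uncolored i j) -> (forall j, S j -> S (s j)) ->
  (forall j, S j -> L i (s j) \notin col_colors j) -> forall j, S j -> s j = j.
Proof.
move=> Sunc sS scol j Sj; apply: (@row_inj i).
apply: (@recolor_row_eq i S (fun j => L i (s j))) => //.
- by move=> ? ? _ _; rewrite (inj_eq (@row_inj i)) (inj_eq (@perm_inj _ s)).
- by move=> j0 Sj0 _; exists (s j0); rewrite ?sS.
Qed.

Lemma uncolored_row_swap i j1 j2 : uncolored i j1 -> uncolored i j2 -> j1 != j2 ->
  (L i j2 \in col_colors j1) || (L i j1 \in col_colors j2).
Proof.
move=> u1 u2 j12; apply/negPn/negP => /norP[n1 n2].
suff : tperm j1 j2 j1 = j1 by rewrite tpermL => /eqP; rewrite eq_sym (negbTE j12).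
apply: (@row_perm_fixed i (pred2 j1 j2)); rewrite /= ?eqxx //.
- by move=> j /pred2P[]->.
- by move=> j /pred2P[]->; rewrite ?tpermL ?tpermR /= eqxx ?orbT.
- by move=> j /pred2P[]->; rewrite ?tpermL ?tpermR.
Qed.

Lemma uncolored_row_rotation i j1 j2 j3 :
  uncolored i j1 -> uncolored i j2 -> uncolored i j3 -> j1 != j2 -> j1 != j3 -> j2 != j3 ->
  [|| L i j2 \in col_colors j1, L i j3 \in col_colors j2 | L i j1 \in col_colors j3].
Proof.
move=> u1 u2 u3 j12 j13 j23; apply/negPn/negP => /norP[n1 /norP[n2 n3]].
pose c := (tperm j1 j2 * tperm j1 j3)%g.
have [c1 c2 c3] : [/\ c j1 = j2, c j2 = j3 & c j3 = j1].
  by rewrite !permM (tpermD j13 j23) !tpermL !tpermR tpermL (tpermD j12) // eq_sym.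
suff : c j1 = j1 by rewrite c1 => /eqP; rewrite eq_sym (negbTE j12).
apply: (@row_perm_fixed i (pred3 j1 j2 j3)); rewrite /= ?eqxx //.
- by move=> j /or3P[]/eqP->.
- by move=> j /or3P[]/eqP->; rewrite ?c1 ?c2 ?c3 eqxx ?orbT.
- by move=> j /or3P[]/eqP->; rewrite ?c1 ?c2 ?c3.
Qed.

Lemma no_three_uncolored_in_row i j1 j2 j3 :
  uncolored i j1 -> uncolored i j2 -> uncolored i j3 -> j1 != j2 -> j1 != j3 -> j2 != j3 -> False.
Proof.
move=> u1 u2 u3 j12 j13 j23.
have s12 := uncolored_row_swap u1 u2 j12.
have s13 := uncolored_row_swap u1 u3 j13.
have s23 := uncolored_row_swap u2 u3 j23.
have r1 := uncolored_row_rotation u1 u2 u3 j12 j13 j23.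
have r2 : [|| L i j3 \in col_colors j1, L i j2 \in col_colors j3 | L i j1 \in col_colors j2].
  by apply: uncolored_row_rotation => //; rewrite eq_sym.
have x1 : ~~ ((L i j2 \in col_colors j1) && (L i j3 \in col_colors j1)).
  apply/negP => /andP[h2 h3]; apply: (@row_color_neq i _ _ j23).
  by apply: (common_color_eq u1); rewrite ?mem_row_colors //; apply: row_color_neq; rewrite eq_sym.
have x2 : ~~ ((L i j1 \in col_colors j2) && (L i j3 \in col_colors j2)).
  apply/negP => /andP[h1 h3]; apply: (@row_color_neq i _ _ j13).
  by apply: (common_color_eq u2); rewrite ?mem_row_colors //;
     apply: row_color_neq; rewrite // eq_sym.
have x3 : ~~ ((L i j1 \in col_colors j3) && (L i j2 \in col_colors j3)).
  apply/negP => /andP[h1 h2]; apply: (@row_color_neq i _ _ j12).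
  by apply: (common_color_eq u3); rewrite ?mem_row_colors //; apply: row_color_neq.
move: s12 s13 s23 x1 x2 x3 r1 r2.
by case: (L i j2 \in col_colors j1); case: (L i j3 \in col_colors j1);
   case: (L i j1 \in col_colors j2); case: (L i j3 \in col_colors j2);
   case: (L i j1 \in col_colors j3); case: (L i j2 \in col_colors j3).
Qed.

Lemma square_recolor_eq i1 i2 j1 j2 y11 y12 y21 y22 :
  uncolored i1 j1 -> uncolored i1 j2 -> uncolored i2 j1 -> uncolored i2 j2 ->
  i1 != i2 -> j1 != j2 ->
  y11 <> y12 -> y21 <> y22 -> y11 <> y21 -> y12 <> y22 ->
  (y11 \in row_colors i1 -> y11 = L i1 j1 \/ y11 = L i1 j2) ->
  (y12 \in row_colors i1 -> y12 = L i1 j1 \/ y12 = L i1 j2) ->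
  (y21 \in row_colors i2 -> y21 = L i2 j1 \/ y21 = L i2 j2) ->
  (y22 \in row_colors i2 -> y22 = L i2 j1 \/ y22 = L i2 j2) ->
  (y11 \in col_colors j1 -> y11 = L i1 j1 \/ y11 = L i2 j1) ->
  (y21 \in col_colors j1 -> y21 = L i1 j1 \/ y21 = L i2 j1) ->
  (y12 \in col_colors j2 -> y12 = L i1 j2 \/ y12 = L i2 j2) ->
  (y22 \in col_colors j2 -> y22 = L i1 j2 \/ y22 = L i2 j2) ->
  [/\ y11 = L i1 j1, y12 = L i1 j2, y21 = L i2 j1 & y22 = L i2 j2].
Proof.
move=> u11 u12 u21 u22 i12 j12 d1 d2 d3 d4 r11 r12 r21 r22 c11 c21 c12 c22.
have i21 : i2 != i1 by rewrite eq_sym.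
have j21 : j2 != j1 by rewrite eq_sym.
pose D i j := pred2 i1 i2 i && pred2 j1 j2 j.
pose y i j := if i == i1 then (if j == j1 then y11 else y12)
              else (if j == j1 then y21 else y22).
have yE : [/\ y i1 j1 = y11, y i1 j2 = y12, y i2 j1 = y21 & y i2 j2 = y22].
  by rewrite /y !eqxx (negbTE i21) (negbTE j21).
case: yE => <- <- <- <-.
suff key : forall i j, D i j -> y i j = L i j.
  by split; apply: key; rewrite /D /= ?eqxx ?orbT.
apply: recolor_eq.
- by move=> i j /andP[/pred2P[]-> /pred2P[]->].
- move=> i j j' /andP[/pred2P[]-> /pred2P[]->] /andP[_ /pred2P[]->];
  by rewrite /y ?eqxx ?(negbTE i21) ?(negbTE j21) // => _; apply/eqP; congruence.
- move=> i i' j /andP[/pred2P[]-> /pred2P[]->] /andP[/pred2P[]-> _];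
  by rewrite /y ?eqxx ?(negbTE i21) ?(negbTE j21) // => _; apply/eqP; congruence.
- move=> i j /andP[/pred2P[]-> /pred2P[]->];
  rewrite /y ?eqxx ?(negbTE i21) ?(negbTE j21);
  first [move/r11|move/r12|move/r21|move/r22] => -[] ->;
  first [by exists j1; rewrite /D /= ?eqxx ?orbT | by exists j2; rewrite /D /= ?eqxx ?orbT].
- move=> i j /andP[/pred2P[]-> /pred2P[]->];
  rewrite /y ?eqxx ?(negbTE i21) ?(negbTE j21);
  first [move/c11|move/c12|move/c21|move/c22] => -[] ->;
  first [by exists i1; rewrite /D /= ?eqxx ?orbT | by exists i2; rewrite /D /= ?eqxx ?orbT].
Qed.

End UniqueExtension.

Section Transpose.
Variables (n k : nat) (P : partial_coloring n k) (L : full_square n k).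

Definition transpose_coloring : partial_coloring n k := fun i j => P j i.
Definition transpose_square : full_square n k := fun i j => L j i.

Lemma extension_of_transpose : extension_of P L -> extension_of transpose_coloring transpose_square.
Proof.
case=> [[row col] PL]; split; [split|] => *; [exact: col | exact: row | exact: PL].
Qed.

Lemma transpose_unique :
  (forall L', extension_of P L' -> forall i j, L' i j = L i j) ->
  forall L', extension_of transpose_coloring L' -> forall i j, L' i j = transpose_square i j.
Proof.
move=> L_unique L' [[row col] PL'] i j.
apply: (L_unique (fun i j => L' j i)); split; [split|] => *;
  [exact: col | exact: row | exact: PL'].
Qed.

End Transpose.

Section Configurations.
Variable n : nat.
Local Notation k := (2 * n - 2).
Variables (P : partial_coloring n k) (L : full_square n k).
Hypothesis LP : extension_of P L.
Hypothesis L_unique : forall L', extension_of P L' -> forall i j, L' i j = L i j.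

Lemma uncolored_col_swap i1 i2 j : uncolored P i1 j -> uncolored P i2 j -> i1 != i2 ->
  (L i2 j \in row_colors L i1) || (L i1 j \in row_colors L i2).
Proof. exact: (uncolored_row_swap (extension_of_transpose LP) (transpose_unique L_unique)). Qed.

Lemma no_three_uncolored_in_col i1 i2 i3 j :
  uncolored P i1 j -> uncolored P i2 j -> uncolored P i3 j ->
  i1 != i2 -> i1 != i3 -> i2 != i3 -> False.
Proof.
exact: (no_three_uncolored_in_row (extension_of_transpose LP) (transpose_unique L_unique)).
Qed.

Lemma no_uncolored_rectangle i1 i2 j1 j2 :
  uncolored P i1 j1 -> uncolored P i1 j2 -> uncolored P i2 j1 -> uncolored P i2 j2 ->
  i1 != i2 -> j1 != j2 -> False.
Proof.
move=> u11 u12 u21 u22 i12 j12.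
apply: (@rectangle_contra _ (mem (row_colors L i1)) (mem (row_colors L i2))
   (mem (col_colors L j1)) (mem (col_colors L j2)) (L i1 j1) (L i1 j2) (L i2 j1) (L i2 j2));
  rewrite /= ?mem_row_colors ?mem_col_colors //;
  try (by apply: (row_color_neq LP)); try (by apply: (col_color_neq LP)).
- by move=> x y *; apply: (common_color_eq LP L_unique u11).
- by move=> x y *; apply: (common_color_eq LP L_unique u12).
- by move=> x y *; apply: (common_color_eq LP L_unique u21).
- by move=> x y *; apply: (common_color_eq LP L_unique u22).
- by move=> y11 y12 y21 y22; exact: (square_recolor_eq LP L_unique u11 u12 u21 u22 i12 j12).
Qed.

Lemma no_uncolored_zigzag r1 r3 r5 c2 c4 c6 :
  uncolored P r1 c2 -> uncolored P r3 c2 -> uncolored P r3 c4 ->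
  uncolored P r5 c4 -> uncolored P r5 c6 ->
  r1 != r3 -> r1 != r5 -> r3 != r5 -> c2 != c4 -> c2 != c6 -> c4 != c6 -> False.
Proof.
move=> u12 u32 u34 u54 u56 r13 r15 r35 c24 c26 c46.
have cover i j x : uncolored P i j -> x \in row_colors L i \/ x \in col_colors L j.
  by move=> uij; apply/orP; exact: (uncolored_cover LP L_unique).
apply: (@zigzag_contra _
    (fun x => x \in row_colors L r1) (fun x => x \in col_colors L c2)
    (fun x => x \in row_colors L r3) (fun x => x \in col_colors L c4)
    (fun x => x \in row_colors L r5) (fun x => x \in col_colors L c6)
    (L r1 c2) (L r3 c2) (L r3 c4) (L r5 c4) (L r5 c6) (L r1 c4) (L r1 c6) (L r3 c6) (L r5 c2));
  rewrite /= ?mem_row_colors ?mem_col_colors //;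
  try (by apply: (row_color_neq LP); rewrite // eq_sym);
  try (by apply: (col_color_neq LP); rewrite // eq_sym).
- by move=> x; case: (cover _ _ x u32); auto.
- by move=> x; case: (cover _ _ x u34); auto.
- by move=> x; case: (cover _ _ x u54); auto.
- by move=> x y h1 h2 h3 h4; exact: (common_color_eq LP L_unique u12 h1 h2 h3 h4).
- by move=> x y h1 h2 h3 h4; exact: (common_color_eq LP L_unique u32 h2 h1 h4 h3).
- by move=> x y h1 h2 h3 h4; exact: (common_color_eq LP L_unique u34 h1 h2 h3 h4).
- by move=> x y h1 h2 h3 h4; exact: (common_color_eq LP L_unique u54 h2 h1 h4 h3).
- by move=> x y h1 h2 h3 h4; exact: (common_color_eq LP L_unique u56 h1 h2 h3 h4).
- by apply/orP; exact: (uncolored_col_swap u12 u32 r13).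
- by apply/orP; exact: (uncolored_row_swap LP L_unique u32 u34 c24).
- by apply/orP; exact: (uncolored_col_swap u34 u54 r35).
- by apply/orP; exact: (uncolored_row_swap LP L_unique u54 u56 c46).
Qed.

Lemma no_uncolored_path5 i j j' i' i2 j2 :
  uncolored P i j -> uncolored P i j' -> uncolored P i' j ->
  uncolored P i2 j' -> uncolored P i' j2 ->
  j' != j -> i' != i -> i2 != i -> j2 != j -> False.
Proof.
move=> uij uij' ui'j ui2j' ui'j2 jj' ii' ii2 jj2.
have [e2|i2i'] := eqVneq i2 i'; have [e3|j2j'] := eqVneq j2 j'; subst.
- by apply: (no_uncolored_rectangle uij uij' ui'j ui2j'); rewrite eq_sym.
- by apply: (no_three_uncolored_in_row LP L_unique ui2j' ui'j2 ui'j); rewrite // eq_sym.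
- by apply: (no_three_uncolored_in_col uij' ui'j2 ui2j'); rewrite // eq_sym.
- by apply: (no_uncolored_zigzag ui2j' uij' uij ui'j ui'j2); rewrite // eq_sym.
Qed.

Local Notation cell := ('I_n * 'I_n)%type.

Definition uncolored_cells := [set x : cell | uncolored P x.1 x.2].

(* A line is a row ([f = fst]) or a column ([f = snd]). *)
Definition line_cells (f : cell -> 'I_n) i := [set x in uncolored_cells | f x == i].
Definition lonely (f : cell -> 'I_n) x := #|line_cells f (f x)| == 1.
Definition crowded_cells := [set x in uncolored_cells | ~~ lonely fst x && ~~ lonely snd x].
Definition mixed_cells := [set x in uncolored_cells | lonely fst x != lonely snd x].
Definition mate (f : cell -> 'I_n) x :=
  odflt x [pick y in uncolored_cells | (f y == f x) && (y != x)].

Lemma in_line_cells f i x : (x \in line_cells f i) = (x \in uncolored_cells) && (f x == i).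
Proof. by rewrite inE. Qed.

Lemma in_crowded_cells x :
  (x \in crowded_cells) = (x \in uncolored_cells) && (~~ lonely fst x && ~~ lonely snd x).
Proof. by rewrite inE. Qed.

Lemma in_mixed_cells x :
  (x \in mixed_cells) = (x \in uncolored_cells) && (lonely fst x != lonely snd x).
Proof. by rewrite inE. Qed.

Lemma uncolored_cellsP x : x \in uncolored_cells -> uncolored P x.1 x.2.
Proof. by rewrite inE. Qed.

Lemma card_row_cells_le2 i : #|line_cells fst i| <= 2.
Proof.
rewrite leqNgt; apply/card_gt2P => -[a [b [c [[]]]]].
rewrite !inE => /andP[ua /eqP ai] /andP[ub /eqP bi] /andP[uc /eqP ci].
rewrite -!pair_eqE /pair_eq ai bi ci eqxx /= => -[ab bc ca].
move: ua ub uc; rewrite ai bi ci => ua ub uc.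
by apply: (no_three_uncolored_in_row LP L_unique ua ub uc); rewrite // eq_sym.
Qed.

Lemma card_col_cells_le2 j : #|line_cells snd j| <= 2.
Proof.
rewrite leqNgt; apply/card_gt2P => -[a [b [c [[]]]]].
rewrite !inE => /andP[ua /eqP aj] /andP[ub /eqP bj] /andP[uc /eqP cj].
rewrite -!pair_eqE /pair_eq aj bj cj eqxx /= !andbT => -[ab bc ca].
move: ua ub uc; rewrite aj bj cj => ua ub uc.
by apply: (no_three_uncolored_in_col ua ub uc); rewrite // eq_sym.
Qed.

Section Line.
Variable f : cell -> 'I_n.
Hypothesis card_line_le2 : forall i, #|line_cells f i| <= 2.

Lemma mateP x : x \in uncolored_cells -> ~~ lonely f x ->
  [/\ mate f x \in uncolored_cells, f (mate f x) = f x & mate f x != x].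
Proof.
move=> xU not_lonely; rewrite /mate; case: pickP => [y /andP[yU /andP[/eqP fy yx]] | none] //.
have : 1 < #|line_cells f (f x)|.
  rewrite ltn_neqAle eq_sym not_lonely; apply/card_gt0P; exists x.
  by rewrite in_line_cells xU eqxx.
rewrite (cardsD1 x) in_line_cells xU eqxx ltnS => /card_gt0P [y].
by rewrite in_setD1 in_line_cells => /andP[yx /andP[yU fy]]; have := none y; rewrite yU fy yx.
Qed.

Lemma line_cells_distinct3 x y z : x \in uncolored_cells -> y \in uncolored_cells ->
  z \in uncolored_cells -> f y = f x -> f z = f x -> x != y -> y != z -> z != x -> False.
Proof.
move=> xU yU zU fy fz xy yz zx.
have := card_line_le2 (f x); rewrite leqNgt => /negP; apply; apply/card_gt2P.
by exists x, y, z; rewrite !in_line_cells xU yU zU fy fz eqxx.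
Qed.

Lemma sum_weight_le : \sum_(x in uncolored_cells) (lonely f x).+1 <= 2 * n.
Proof.
rewrite (partition_big f predT) //=.
apply: leq_trans (_ : \sum_(i : 'I_n) 2 <= _); last by rewrite sum_nat_const card_ord mulnC.
apply: leq_sum => i _.
rewrite (eq_bigr (fun _ => (#|line_cells f i| == 1).+1)); last by move=> x /andP[_ /eqP <-].
rewrite sum_nat_const (eq_card (B := line_cells f i)) => [|x]; last by rewrite in_line_cells.
by have := card_line_le2 i; case: #|line_cells f i| => [|[|[|]]].
Qed.

End Line.

Definition mixed_mate x := if lonely snd (mate fst x) then mate fst x else mate snd x.

Lemma mixed_mate_mixed x : x \in crowded_cells -> mixed_mate x \in mixed_cells.
Proof.
rewrite in_crowded_cells => /andP[xU /andP[nr nc]].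
have [yU y1 yx] := mateP xU nr.
have [zU z2 zx] := mateP xU nc.
have ly : lonely fst (mate fst x) = lonely fst x by rewrite /lonely y1.
have lz : lonely snd (mate snd x) = lonely snd x by rewrite /lonely z2.
rewrite /mixed_mate; case: ifP => [ly'|/negbT nly].
  by rewrite in_mixed_cells yU ly (negbTE nr) ly'.
rewrite in_mixed_cells zU lz (negbTE nc).
case: (boolP (lonely fst (mate snd x))) => // nlz; exfalso.
have [wU w2 wy] := mateP yU nly.
have [vU v1 vz] := mateP zU nlz.
apply: (@no_uncolored_path5 x.1 x.2 (mate fst x).2 (mate snd x).1
  (mate snd (mate fst x)).1 (mate fst (mate snd x)).2).
- exact: uncolored_cellsP.
- by rewrite -y1; exact: uncolored_cellsP.
- by rewrite -z2; exact: uncolored_cellsP.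
- by rewrite -w2; exact: uncolored_cellsP.
- by rewrite -v1; exact: uncolored_cellsP.
- by move: yx; rewrite -pair_eqE /pair_eq y1 eqxx.
- by move: zx; rewrite -pair_eqE /pair_eq z2 eqxx andbT.
- by move: wy; rewrite -y1 -pair_eqE /pair_eq w2 eqxx andbT.
- by move: vz; rewrite -z2 -pair_eqE /pair_eq v1 eqxx.
Qed.

Lemma mixed_mate_inj : {in crowded_cells &, injective mixed_mate}.
Proof.
move=> x1 x2; rewrite !in_crowded_cells => /andP[x1U /andP[nr1 nc1]] /andP[x2U /andP[nr2 nc2]].
have [y1U y11 y1x] := mateP x1U nr1; have [z1U z12 z1x] := mateP x1U nc1.
have [y2U y21 y2x] := mateP x2U nr2; have [z2U z22 z2x] := mateP x2U nc2.
have lz1 : lonely snd (mate snd x1) = false by rewrite -(negbTE nc1) /lonely z12.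
have lz2 : lonely snd (mate snd x2) = false by rewrite -(negbTE nc2) /lonely z22.
rewrite /mixed_mate; case: ifP => h1; case: ifP => h2 e.
- apply/eqP; apply: contraT => x12; exfalso.
  apply: (line_cells_distinct3 card_row_cells_le2 x1U x2U y1U) => //.
  + by rewrite -y21 -e y11.
  + by rewrite e eq_sym.
- by move: h1; rewrite e lz2.
- by move: h2; rewrite -e lz1.
- apply/eqP; apply: contraT => x12; exfalso.
  apply: (line_cells_distinct3 card_col_cells_le2 x1U x2U z1U) => //.
  + by rewrite -z22 -e z12.
  + by rewrite e eq_sym.
Qed.

Lemma card_crowded_le_mixed : #|crowded_cells| <= #|mixed_cells|.
Proof.
rewrite -(card_in_imset mixed_mate_inj); apply: subset_leq_card.
by apply/subsetP => y /imsetP[x xD ->]; exact: mixed_mate_mixed.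
Qed.

Lemma card_uncolored_cells_le : 5 * #|uncolored_cells| <= 8 * n.
Proof.
have charge : \sum_(x in uncolored_cells) (5 + (x \in mixed_cells)) <=
    \sum_(x in uncolored_cells)
      (2 * (lonely fst x).+1 + 2 * (lonely snd x).+1 + (x \in crowded_cells)).
  apply: leq_sum => x xU; rewrite in_mixed_cells in_crowded_cells xU.
  by case: (lonely fst x); case: (lonely snd x).
have sub_mixed : mixed_cells \subset uncolored_cells.
  by apply/subsetP => x; rewrite in_mixed_cells => /andP[].
have sub_crowded : crowded_cells \subset uncolored_cells.
  by apply/subsetP => x; rewrite in_crowded_cells => /andP[].
rewrite !big_split /= sum_nat_const !sum_mem_subset // -!big_distrr /= in charge.
have := leq_trans charge (leq_add (leq_add
  (leq_mul (leqnn 2) (sum_weight_le card_row_cells_le2))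
  (leq_mul (leqnn 2) (sum_weight_le card_col_cells_le2))) card_crowded_le_mixed).
rewrite leq_add2r mulnC => /leq_trans; apply; lia.
Qed.

End Configurations.

Theorem theorem1 (n : nat) (hn : 1 <= n)
    (P : partial_coloring n (2 * n - 2)) :
  uniquely_extends P -> 5 * num_uncolored P <= 8 * n.
Proof. by case=> L [LP L_unique]; exact: (card_uncolored_cells_le LP L_unique). Qed.
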